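(* Every $T_1$ fair topological space is a D-space.
   Context: A topological space $(X,\tau)$ is fair if for every collection $\mathcal D$ of closed discrete subsets of $X$ that is linearly ordered by inclusion (nested), if $\bigcup\mathcal D$ is discrete then $\bigcup\mathcal D$ is closed. An open neighborhood assignment is a function $N:X\to\tau$ with $x\in N(x)$ for all $x$. $X$ is a D-space if for every open neighborhood assignment $N$ there is a closed discrete $D\subseteq X$ with $\bigcup_{d\in D}N(d)=X$. *)

From HB Require Import structures.
From mathcomp Require Import all_boot all_order all_algebra.
From mathcomp Require Import all_classical all_reals all_analysis.
Set Implicit Arguments. Unset Strict Implicit. Unset Printing Implicit Defensive.
Local Open Scope classical_set_scope.

Definition discrete_subset {X : topologicalType} (A : set X) : Prop :=
  forall x, A x -> exists U : set X, [/\ open U, U x & U `&` A = [set x]].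

Definition closed_discrete {X : topologicalType} (A : set X) : Prop :=
  closed A /\ discrete_subset A.

Definition nested {X : Type} (D : set (set X)) : Prop :=
  forall A B, D A -> D B -> A `<=` B \/ B `<=` A.

Definition fair_space (X : topologicalType) : Prop :=
  forall D : set (set X),
    (forall A, D A -> closed_discrete A) -> nested D ->
    discrete_subset (\bigcup_(A in D) A) -> closed (\bigcup_(A in D) A).

Definition open_nbhd_assignment {X : topologicalType} (N : X -> set X) : Prop :=
  forall x, open (N x) /\ N x x.

Definition D_space (X : topologicalType) : Prop :=
  forall N : X -> set X, open_nbhd_assignment N ->
    exists D : set X, closed_discrete D /\ \bigcup_(d in D) N d = setT.

From mathcomp Require Import all_boot all_order all_algebra.
From mathcomp Require Import all_classical all_reals all_analysis.
Set Implicit Arguments. Unset Strict Implicit. Unset Printing Implicit Defensive.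
Local Open Scope classical_set_scope.

(* Order the closed discrete sets by end-extension with respect to N.  The
   union of a chain is discrete (a point d of the chain is isolated by N d
   intersected with its isolating neighbourhood in one member), hence closed
   by fairness, so Zorn's lemma gives a maximal D.  If some x were not covered
   by the N d, then D + x would be closed discrete (singletons are closed in a
   T1 space) and would end-extend D, contradicting maximality. *)

Lemma closed_discrete_set0 (X : topologicalType) : closed_discrete (@set0 X).
Proof. by split; [exact: closed0 | by []]. Qed.

Lemma closed_discrete_setU1 (X : topologicalType) (A : set X) (x : X) :
  accessible_space X -> closed_discrete A -> ~ A x ->
  closed_discrete (A `|` [set x]).
Proof.
move=> T1 [Acl Adisc] nAx.
have x_cl : closed [set x] := @accessible_closed_set1 X T1 x.
split; first exact: closedU.
move=> y [Ay|->].
- have [V [oV Vy VA]] := Adisc y Ay.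
  have yx : y <> x by move=> yx; apply: nAx; rewrite -yx.
  exists (V `&` ~` [set x]); split; first exact/openI/closed_openC.
    by split.
  apply/seteqP; split=> [z [[Vz nzx] [Az|//]]|z ->]; last by split; [split|left].
  by have : (V `&` A) z by []; rewrite VA.
- exists (~` A); split; first exact: closed_openC.
    exact: nAx.
  by apply/seteqP; split=> [z [nAz [//|->]]|z ->]; split=> //; right.
Qed.

Section EndExtension.
Variables (X : topologicalType) (N : X -> set X).

Definition end_extends (D E : set X) : Prop :=
  D `<=` E /\ forall d x, D d -> E x -> N d x -> D x.

Lemma end_extends_refl D : end_extends D D.
Proof. by split. Qed.

Lemma end_extends_trans D E F :
  end_extends D E -> end_extends E F -> end_extends D F.
Proof.
move=> [DE hDE] [EF hEF]; split=> [z /DE /EF //|d x Dd Fx Ndx].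
exact: (hDE d x Dd (hEF d x (DE d Dd) Fx Ndx) Ndx).
Qed.

Hypothesis HN : open_nbhd_assignment N.

Lemma discrete_bigcup_end_chain (F : set (set X)) :
  (forall A, F A -> discrete_subset A) ->
  (forall A B, F A -> F B -> end_extends A B \/ end_extends B A) ->
  discrete_subset (\bigcup_(A in F) A).
Proof.
move=> Fdisc Fchain d [A FA Ad].
have [V [oV Vd VA]] := Fdisc A FA d Ad.
have isolated y : V y -> A y -> y = d.
  by move=> Vy Ay; have : (V `&` A) y by []; rewrite VA.
exists (V `&` N d); split; first exact/openI/(HN d).1.
  by split=> //; exact: (HN d).2.
apply/seteqP; split=> [y [[Vy Ndy] [B FB By]]|y ->].
  have [[_ AB]|[BA _]] := Fchain A B FA FB; apply: isolated => //.
    exact: AB By Ndy.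
  exact: BA.
by split; [split=> //; exact: (HN d).2 | exists A].
Qed.

Lemma exists_maximal_end_extension : fair_space X ->
  exists D, closed_discrete D /\
    forall E, closed_discrete E -> end_extends D E -> E `<=` D.
Proof.
move=> fair; pose T := {D : set X | closed_discrete D}.
pose R (a b : T) : bool := `[< end_extends (sval a) (sval b) >].
have [a|a b c /asboolP ab /asboolP bc|F Fchain|t tmax] :=
    @ZL_preorder T (exist _ set0 (closed_discrete_set0 X)) R.
- by apply/asboolP; exact: end_extends_refl.
- by apply/asboolP; exact: end_extends_trans bc.
- pose U := \bigcup_(A in sval @` F) A.
  have chain A B : (sval @` F) A -> (sval @` F) B ->
      end_extends A B \/ end_extends B A.
    move=> [a Fa <-] [b Fb <-].
    by have [/asboolP|/asboolP] := Fchain a b Fa Fb; [left|right].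
  have Udisc : discrete_subset U.
    by apply: discrete_bigcup_end_chain => // _ [a _ <-]; case: (svalP a).
  have Ucl : closed U.
    apply: fair => //; first by move=> _ [a _ <-]; exact: svalP.
    by move=> A B FA FB; have [[]|[]] := chain A B FA FB; [left|right].
  exists (exist _ U (conj Ucl Udisc)) => a Fa; apply/asboolP; split.
    by move=> z az; exists (sval a) => //; exists a.
  move=> d x ad [_ [b Fb <-] bx] Ndx.
  have [/asboolP [_ ab]|/asboolP [ba _]] := Fchain a b Fa Fb.
    exact: ab bx Ndx.
  exact: ba.
- exists (sval t); split=> [|E Ecl tE]; first exact: svalP.
  by have /asboolP [] := tmax (exist _ E Ecl) (asboolT tE).
Qed.

Lemma maximal_end_extension_covers (D : set X) : accessible_space X ->
  closed_discrete D ->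
  (forall E, closed_discrete E -> end_extends D E -> E `<=` D) ->
  \bigcup_(d in D) N d = setT.
Proof.
move=> T1 Dcd Dmax; apply/seteqP; split=> // x _; apply: contrapT => nx.
have nN d : D d -> ~ N d x by move=> Dd Ndx; apply: nx; exists d.
have nDx : ~ D x by move=> Dx; exact: nN x Dx (HN x).2.
have Dx_ext : end_extends D (D `|` [set x]).
  by split=> [z Dz|d y Dd [//|->] /(nN d Dd)]; [left|].
by apply: (nDx); apply: (Dmax _ (closed_discrete_setU1 T1 Dcd nDx) Dx_ext); right.
Qed.

End EndExtension.

Theorem mainTheorem3 (X : topologicalType) :
  accessible_space X -> fair_space X -> D_space X.
Proof.
move=> T1 fair N HN.
have [D [Dcd Dmax]] := exists_maximal_end_extension HN fair.
exists D; split; first exact: Dcd.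
exact: (maximal_end_extension_covers HN T1 Dcd Dmax).
Qed.
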